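(* In the IM-OCP setting described in the context, with $r_1\in[0,B]$ and any non-increasing sequence of positive step sizes $(\eta_t)_{t\ge1}$, for every $T\ge1$ the expected miscoverage error satisfies $$\overline{\mathrm{MisCov}}(T):=\left|\mathbb{E}\left[\frac{1}{T}\sum_{t=1}^T E_t\right]-\alpha\right|\le\frac{1}{T\eta_T}\left(LB+\frac{L\eta_1}{\mu\,p_{\min}}\right),$$ where $p_{\min}=\min_{t\in\{1,\dots,T\}}p_t$ and the expectation is over the feedback indicators $(\mathrm{obs}_t)$.
   Context: Fix $\alpha\in(0,1)$ and $B>0$. Let $(r_t^* )_{t\ge1}$ be an arbitrary deterministic sequence of scores with $r_t^*\in[0,B]$ (the score $r_t^*=s(X_t,Y_t)$ of the true label; the prediction set at time $t$ is $\{y: s(X_t,y)\le r_t\}$). Given thresholds $r_t$, the miscoverage indicator is $E_t=\mathbb{1}\{r_t^*>r_t\}$. The quantile loss is $\ell_{1-\alpha}(r,r^* )=(\alpha-\mathbb{1}\{r<r^*\})(r-r^* )$. Let $P$ be a probability distribution on $[0,B]$ with bounded density, $\sigma>0$, and $R(r)=\mathbb{E}_{r^*\sim P}[\ell_{1-\alpha}(r,r^* )]+\frac{\sigma}{2}r^2$; $R$ is differentiable and $\nabla R$ is a continuous strictly increasing bijection of $\mathbb{R}$. Let $\mu>0$ be a constant such that $R$ is $\mu$-strongly convex (e.g. $\mu=\sigma$) and $L>0$ a constant such that $\nabla R$ is $L$-Lipschitz. Feedback: $p_t\in(0,1]$ and $(\mathrm{obs}_t)_{t\ge1}$ are independent Bernoulli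 random variables with $\Pr(\mathrm{obs}_t=1)=p_t$. IM-OCP: given $r_1$ and step sizes $\eta_t>0$, for $t\ge2$ the threshold $r_t$ is defined by $$\nabla R(r_t)=\nabla R(r_{t-1})-\eta_{t-1}(\alpha-E_{t-1})\frac{\mathrm{obs}_{t-1}}{p_{t-1}}.$$ *)

From HB Require Import structures.
From mathcomp Require Import all_boot all_order all_algebra.
From mathcomp Require Import all_classical all_reals all_analysis.
Set Implicit Arguments. Unset Strict Implicit. Unset Printing Implicit Defensive.
Import Order.TTheory GRing.Theory Num.Theory.
Import numFieldNormedType.Exports.
Local Open Scope classical_set_scope.
Local Open Scope ring_scope.

Section Defs.
Variable R : realType.

Definition qloss (alpha r rs : R) : R := (alpha - ((r < rs)%R)%:R) * (r - rs).

Definition risk (P : probability R R) (alpha sigma : R) (r : R) : R :=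
  Rintegral P setT (fun x => qloss alpha r x) + sigma / 2 * r ^+ 2.

Definition supported_on (P : probability R R) (B : R) : Prop :=
  P [set x | 0 <= x <= B] = 1%E.

Definition has_bounded_density (P : probability R R) : Prop :=
  exists (f : R -> R) (K : R),
    measurable_fun setT f /\ (forall x, 0 <= f x <= K) /\
    forall A, measurable A ->
      P A = (\int[lebesgue_measure]_(x in A) (f x)%:E)%E.

Definition strongly_convex (mu : R) (f : R -> R) : Prop :=
  forall x y t, 0 <= t <= 1 ->
    f (t * x + (1 - t) * y) <=
      t * f x + (1 - t) * f y - mu / 2 * t * (1 - t) * (x - y) ^+ 2.

Definition lipschitzL (L : R) (g : R -> R) : Prop :=
  forall x y, `|g x - g y| <= L * `|x - y|.

(* feedback realisation: obs_t = w (t-1) for 1 <= t <= T (other values irrelevant) *)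
Definition obs_of (T : nat) (w : {ffun 'I_T -> bool}) (t : nat) : bool :=
  if @insub _ (fun i => i < T)%N 'I_T t.-1 is Some i then w i else false.

(* probability of the outcome w under independent Bernoulli(p_t), t = 1..T *)
Definition bern_weight (p : nat -> R) (T : nat) (w : {ffun 'I_T -> bool}) : R :=
  \prod_(i < T) (if w i then p i.+1 else 1 - p i.+1).

Definition exp_miscov (p : nat -> R) (rstar : nat -> R)
    (r : (nat -> bool) -> nat -> R) (T : nat) : R :=
  \sum_(w : {ffun 'I_T -> bool})
     bern_weight p w *
     (T%:R^-1 * \sum_(1 <= t < T.+1) ((rstar t > r (obs_of w) t)%R)%:R).

End Defs.

From HB Require Import structures.
From mathcomp Require Import all_boot all_order all_algebra.
From mathcomp Require Import all_classical all_reals all_analysis.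
From mathcomp Require Import ring lra zify.
From Stdlib Require Import Lia.
Import Order.TTheory GRing.Theory Num.Theory.
Import numFieldNormedType.Exports.
Local Open Scope classical_set_scope.
Local Open Scope ring_scope.

(* Write g for the derivative of the risk. The update
   g(r_{t+1}) = g(r_t) - eta_t (alpha - E_t) obs_t / p_t keeps g(r_t) inside a band
   of width g(B) - g(0) + eta_1 / p_min: it moves up only when r_t < r*_t <= B and
   down only when r_t >= r*_t >= 0, and g is nondecreasing. Since the update
   rearranges to (alpha - E_t) obs_t / p_t = (g(r_t) - g(r_{t+1})) / eta_t, summation
   by parts with the nondecreasing weights 1 / eta_t bounds the importance-weighted
   sum by that width over eta_T, for every feedback realisation. In expectation the
   weights obs_t / p_t disappear because r_t depends only on obs_1, ..., obs_{t-1}.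
   Strong convexity makes g strongly monotone, which with the Lipschitz bound gives
   g(B) - g(0) <= L B and mu <= L. *)

Section StronglyMonotone.
Context {R : realType}.

Definition strongly_monotone (mu : R) (g : R -> R) : Prop :=
  forall x y, mu * (y - x) ^+ 2 <= (g y - g x) * (y - x).

Context {g : R -> R} {mu : R}.
Hypotheses (mu_gt0 : 0 < mu) (g_mono : strongly_monotone mu g).

Lemma strongly_monotone_homo : {homo g : x y / x <= y}.
Proof.
move=> x y; rewrite le_eqVlt => /predU1P[-> // | xy].
have sq_gt0 : 0 < mu * (y - x) ^+ 2 by rewrite mulr_gt0 // exprn_gt0 // subr_gt0.
have := lt_le_trans sq_gt0 (g_mono x y).
by rewrite pmulr_lgt0 ?subr_gt0 // => /ltW.
Qed.

Lemma strongly_monotone_inj : injective g.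
Proof.
move=> x y gxy; have := g_mono x y; rewrite gxy subrr mul0r pmulr_rle0 // => sq_le0.
by apply/eqP; rewrite eq_sym -subr_eq0 -sqrf_eq0 eq_le sq_le0 sqr_ge0.
Qed.

Lemma strongly_monotone_le_lipschitz L : lipschitzL L g -> mu <= L.
Proof.
move=> g_lip; have := g_mono 0 1; rewrite subr0 expr1n !mulr1 => mu_le.
have := g_lip 1 0; rewrite subr0 normr1 mulr1 => lip1.
exact: le_trans mu_le (le_trans (ler_norm _) lip1).
Qed.

End StronglyMonotone.

Section StronglyConvex.
Context {R : realType} {f : R -> R} {mu : R}.
Hypothesis f_convex : strongly_convex mu f.

Lemma strongly_convex_first_order x y : derivable f x 1 ->
  derive1 f x * (y - x) + mu / 2 * (y - x) ^+ 2 <= f y - f x.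
Proof.
move=> /derivable1_diffP dfx; set d := y - x.
have Dd : 'D_d f x = derive1 f x * d.
  rewrite derive1E !deriveE // -[X in 'd f x X]mulr1 -[d * 1]/(d *: (1:R^o)).
  by rewrite linearZ /= mulrC.
have chord : \forall h \near 0^'+,
    h^-1 *: (f (h *: d + x) - f x) <= f y - f x - mu / 2 * (1 - h) * d ^+ 2.
  near=> h.
  have h0 : 0 < h by near: h; exact: nbhs_right_gt.
  have h1 : h <= 1 by near: h; exact: nbhs_right_le.
  have := f_convex y x h; rewrite (ltW h0) h1 => /(_ isT).
  have -> : h * y + (1 - h) * x = h *: d + x by rewrite /d /GRing.scale /=; ring.
  rewrite /GRing.scale /= mulrC ler_pdivrMl // /d.
  nra.
have chord_cvg : (fun h => f y - f x - mu / 2 * (1 - h) * d ^+ 2) @ 0^'+ -->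
    f y - f x - mu / 2 * d ^+ 2.
  apply: cvg_at_right_filter.
  have -> : f y - f x - mu / 2 * d ^+ 2 = f y - f x - mu / 2 * (1 - 0) * d ^+ 2.
    by rewrite subr0 mulr1.
  apply: cvgB; first exact: cvg_cst.
  apply: cvgMr_tmp; apply: cvgMl_tmp; apply: cvgB; [exact: cvg_cst | exact: cvg_id].
suff : derive1 f x * d <= f y - f x - mu / 2 * d ^+ 2 by lra.
rewrite -Dd; exact: ler_cvg_to (cvg_dnbhs_at_right (diff_derivable dfx)) chord_cvg chord.
Unshelve. all: by end_near.
Qed.

Lemma strongly_convex_derive1_monotone :
  (forall x, derivable f x 1) -> strongly_monotone mu (derive1 f).
Proof.
move=> f_der x y.
have := strongly_convex_first_order x y (f_der x).
have := strongly_convex_first_order y x (f_der y).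
rewrite (_ : (x - y) ^+ 2 = (y - x) ^+ 2); last by ring.
nra.
Qed.

End StronglyConvex.

Section WeightedTelescope.
Context {R : realType} {G u : nat -> R} {lo hi : R}.
Hypothesis u_gt0 : forall t, (1 <= t)%N -> 0 < u t.
Hypothesis u_nondecr : forall t, (1 <= t)%N -> u t <= u t.+1.

Lemma weighted_telescope_band n : (1 <= n)%N ->
  (forall t, (1 <= t <= n.+1)%N -> lo <= G t <= hi) ->
  0 <= \sum_(1 <= t < n.+1) (G t - G t.+1) * u t + (G n.+1 - lo) * u n
    <= (hi - lo) * u n.
Proof.
elim: n => [//|[|n] IH] _ G_in.
  rewrite big_nat1; have /andP[G1lo G1hi] := G_in 1%N isT.
  have u1 := u_gt0 1%N isT; apply/andP; split; nra.
rewrite big_nat_recr //=.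
have /andP[IHlo IHhi] := IH isT (fun t ht => G_in t ltac:(lia)).
have /andP[Glo Ghi] := G_in n.+2 ltac:(lia).
have un := u_gt0 n.+1 isT; have du := u_nondecr n.+1 isT.
apply/andP; split; nra.
Qed.

Lemma weighted_telescope_abs_le n : (1 <= n)%N ->
  (forall t, (1 <= t <= n.+1)%N -> lo <= G t <= hi) ->
  `| \sum_(1 <= t < n.+1) (G t - G t.+1) * u t | <= (hi - lo) * u n.
Proof.
move=> n_gt0 G_in.
have /andP[band_lo band_hi] := weighted_telescope_band _ n_gt0 G_in.
have /andP[Glo Ghi] := G_in n.+1 ltac:(lia).
have un := u_gt0 n n_gt0.
rewrite ler_norml; apply/andP; split; nra.
Qed.

End WeightedTelescope.

Lemma recursion_causal {X A : Type} (g : X -> A) (H : nat -> X -> bool -> A)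
    (r : (nat -> bool) -> nat -> X) (r1 : X) :
  injective g -> (forall o, r o 1%N = r1) ->
  (forall o t, (1 <= t)%N -> g (r o t.+1) = H t (r o t) (o t)) ->
  forall t o o', (1 <= t)%N -> (forall s, (1 <= s < t)%N -> o s = o' s) ->
  r o t = r o' t.
Proof.
move=> g_inj r_init r_step; elim=> [//|[|t] IH] o o' _ o_eq; first by rewrite !r_init.
have o_eq_last : o t.+1 = o' t.+1 by apply: o_eq; lia.
apply: g_inj; rewrite !r_step // o_eq_last (IH o o') // => s /andP[s1 st].
by apply: o_eq; lia.
Qed.

Section BernoulliProduct.
Context {R : realType}.
Variable p : nat -> R.
Context {T : nat}.
Implicit Types w : {ffun 'I_T -> bool}.

Definition toggle (i : 'I_T) w : {ffun 'I_T -> bool} :=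
  [ffun j => if j == i then ~~ w j else w j].

Lemma toggleK i : involutive (toggle i).
Proof.
by move=> w; apply/ffunP => j; rewrite !ffunE; case: eqP => //; rewrite negbK.
Qed.

Lemma obs_of_ord w (i : 'I_T) : obs_of w i.+1 = w i.
Proof.
rewrite /obs_of /= insubT /= => [|lt_iT]; first exact: ltn_ord.
by congr (w _); apply: val_inj.
Qed.

Lemma obs_of_toggle (i : 'I_T) w t : t.-1 != i -> obs_of (toggle i w) t = obs_of w t.
Proof.
rewrite /obs_of; case: insubP => //= j _ jE ne_ti.
by rewrite ffunE; case: eqP => // ji; move: ne_ti; rewrite -jE ji eqxx.
Qed.

Lemma bern_weight_ge0 w : (forall i : 'I_T, 0 <= p i.+1 <= 1) -> 0 <= bern_weight p w.
Proof.
move=> p_in; apply: prodr_ge0 => i _; have /andP[p0 p1] := p_in i.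
by case: (w i); rewrite ?subr_ge0.
Qed.

Lemma sum_bern_weight : \sum_(w : {ffun 'I_T -> bool}) bern_weight p w = 1.
Proof.
rewrite /bern_weight -(bigA_distr_bigA (fun (i : 'I_T) (b : bool) =>
  if b then p i.+1 else 1 - p i.+1)).
by apply: big1 => i _; rewrite big_bool /=; ring.
Qed.

(* Pairing each outcome with its toggle at [i] cancels the importance weight. *)
Lemma bern_ipw_unbiased (i : 'I_T) (h : {ffun 'I_T -> bool} -> R) :
  p i.+1 != 0 -> (forall w, h (toggle i w) = h w) ->
  \sum_(w : {ffun 'I_T -> bool}) bern_weight p w * (h w * ((w i)%:R / p i.+1))
    = \sum_(w : {ffun 'I_T -> bool}) bern_weight p w * h w.
Proof.
move=> p_neq0 h_toggle; apply/eqP; rewrite -subr_eq0 -sumrB; apply/eqP.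
pose F w := bern_weight p w * (h w * ((w i)%:R / p i.+1)) - bern_weight p w * h w.
have F_pair w : F w + F (toggle i w) = 0.
  pose rest := \prod_(j < T | j != i) (if w j then p j.+1 else 1 - p j.+1).
  have weightE : bern_weight p w = (if w i then p i.+1 else 1 - p i.+1) * rest.
    by rewrite /bern_weight (bigD1 i).
  have weight_toggleE :
      bern_weight p (toggle i w) = (if w i then 1 - p i.+1 else p i.+1) * rest.
    rewrite /bern_weight (bigD1 i) //= ffunE eqxx; case: (w i) => /=;
    by congr (_ * _); apply: eq_bigr => j /negPf ji; rewrite ffunE ji.
  rewrite /F h_toggle weightE weight_toggleE ffunE eqxx.
  by case: (w i) => /=; field.
have F_sum : \sum_w F w = \sum_w F (toggle i w).
  by rewrite (reindex_inj (inv_inj (toggleK i))).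
have : 2 * \sum_w F w = 0.
  by rewrite mulr2n mulrDl mul1r {2}F_sum -big_split /=; apply: big1.
rewrite /F; lra.
Qed.

End BernoulliProduct.

Section IMOCP.
Context {R : realType} {alpha mu B r1 K : R} {g : R -> R} {rstar p eta : nat -> R}.
Context {r : (nat -> bool) -> nat -> R} {T : nat}.
Hypotheses (alpha_gt0 : 0 < alpha) (alpha_lt1 : alpha < 1).
Hypotheses (mu_gt0 : 0 < mu) (g_mono : strongly_monotone mu g).
Hypothesis rstar_in : forall t, (1 <= t)%N -> 0 <= rstar t <= B.
Hypothesis p_in : forall t, (1 <= t)%N -> 0 < p t <= 1.
Hypothesis eta_gt0 : forall t, (1 <= t)%N -> 0 < eta t.
Hypothesis eta_nonincr : forall s t, (1 <= s)%N -> (s <= t)%N -> eta t <= eta s.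
Hypothesis r1_in : 0 <= r1 <= B.
Hypothesis r_init : forall o, r o 1%N = r1.
Hypothesis r_step : forall o t, (1 <= t)%N ->
  g (r o t.+1) = g (r o t) - eta t * (alpha - ((rstar t > r o t)%R)%:R) * ((o t)%:R / p t).
Hypothesis step_le : forall t, (1 <= t <= T)%N -> eta t / p t <= K.
Hypothesis T_gt0 : (1 <= T)%N.

Local Notation miscov o t := ((rstar t > r o t)%R)%:R.
Local Notation lo := (g 0 - alpha * K).
Local Notation hi := (g B + (1 - alpha) * K).

Let g_homo := strongly_monotone_homo mu_gt0 g_mono.

Lemma grad_step_band x s k (b : bool) : 0 <= s <= B -> 0 <= k <= K ->
  lo <= g x <= hi -> lo <= g x - k * (alpha - ((s > x)%R)%:R) * b%:R <= hi.
Proof.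
move=> /andP[s0 sB] /andP[k0 kK] /andP[gx_lo gx_hi].
have aK : alpha * k <= alpha * K by rewrite ler_pM2l.
have aK' : (1 - alpha) * k <= (1 - alpha) * K by rewrite ler_pM2l ?subr_gt0.
case: b; last by rewrite mulr0 subr0 gx_lo gx_hi.
case: ltP => [xs | sx] /=.
- have := g_homo _ _ (ltW (lt_le_trans xs sB)).
  have : 0 <= (1 - alpha) * k by rewrite mulr_ge0 // subr_ge0 ltW.
  move=> ak0 gxB; apply/andP; split; nra.
- have := g_homo _ _ (le_trans s0 sx).
  have : 0 <= alpha * k by rewrite mulr_ge0 // ltW.
  move=> ak0 g0x; apply/andP; split; nra.
Qed.

Lemma grad_iterate_band o t : (1 <= t <= T.+1)%N -> lo <= g (r o t) <= hi.
Proof.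
elim: t => [//|[|t] IH] /andP[_ tT].
  have K_ge0 : 0 <= K.
    have /andP[p1_gt0 _] := p_in 1%N isT.
    by apply: le_trans (step_le 1%N T_gt0); rewrite divr_ge0 // ltW // eta_gt0.
  have /andP[r10 r1B] := r1_in; have := g_homo _ _ r10; have := g_homo _ _ r1B.
  have aK0 : 0 <= alpha * K by rewrite mulr_ge0 // ltW.
  have aK1 : 0 <= (1 - alpha) * K by rewrite mulr_ge0 // subr_ge0 ltW.
  rewrite r_init; move=> gB g0; apply/andP; split; lra.
have /andP[p_gt0 _] := p_in t.+1 isT.
rewrite r_step // (_ : eta t.+1 * _ * _ = eta t.+1 / p t.+1 *
  (alpha - miscov o t.+1) * (o t.+1)%:R); last by field; rewrite gt_eqF.
apply: grad_step_band; first exact: rstar_in.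
  by rewrite step_le ?andbT // divr_ge0 // ltW // eta_gt0.
by apply: IH; rewrite /= ltnW.
Qed.

Lemma ipw_sum_bound o :
  `| \sum_(1 <= t < T.+1) (alpha - miscov o t) * ((o t)%:R / p t) |
    <= (eta T)^-1 * (g B - g 0 + K).
Proof.
have -> : \sum_(1 <= t < T.+1) (alpha - miscov o t) * ((o t)%:R / p t)
    = \sum_(1 <= t < T.+1) (g (r o t) - g (r o t.+1)) * (eta t)^-1.
  apply: eq_big_nat => t /andP[t1 _]; rewrite r_step //.
  have /andP[p_gt0 _] := p_in t t1.
  by field; rewrite !gt_eqF ?eta_gt0.
rewrite mulrC (_ : g B - g 0 + K = hi - lo); last by ring.
apply: weighted_telescope_abs_le _ T_gt0 (grad_iterate_band o).
- by move=> t t1; rewrite invr_gt0 eta_gt0.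
- by move=> t t1; rewrite lef_pV2 ?posrE ?eta_gt0 // eta_nonincr.
Qed.

Let weight_ge0 (w : {ffun 'I_T -> bool}) : 0 <= bern_weight p w.
Proof. by apply: bern_weight_ge0 => i; have /andP[/ltW -> ->] := p_in i.+1 isT. Qed.

Lemma expected_ipw_sum :
  \sum_(w : {ffun 'I_T -> bool}) bern_weight p w *
      \sum_(1 <= t < T.+1) (alpha - miscov (obs_of w) t) * ((obs_of w t)%:R / p t)
  = \sum_(w : {ffun 'I_T -> bool}) bern_weight p w *
      \sum_(1 <= t < T.+1) (alpha - miscov (obs_of w) t).
Proof.
under eq_bigr do rewrite big_add1 /= big_mkord big_distrr.
under [RHS]eq_bigr do rewrite big_add1 /= big_mkord big_distrr.
rewrite exchange_big [RHS]exchange_big /=; apply: eq_bigr => i _.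
under eq_bigr do rewrite obs_of_ord.
apply: (bern_ipw_unbiased p i (fun w => alpha - miscov (obs_of w) i.+1)).
  by have /andP[p_gt0 _] := p_in i.+1 isT; rewrite gt_eqF.
move=> w /=.
have g_inj := strongly_monotone_inj mu_gt0 g_mono.
pose step t x (b : bool) := g x - eta t * (alpha - ((rstar t > x)%R)%:R) * (b%:R / p t).
rewrite (recursion_causal g step r r1 g_inj r_init r_step i.+1 (obs_of (toggle i w))
  (obs_of w)) // => s /andP[s1 si].
by apply: obs_of_toggle; rewrite neq_ltn; apply/orP; left; case: s s1 si.
Qed.

Lemma expected_miscov_bound :
  `| exp_miscov p rstar r T - alpha | <= (T%:R * eta T)^-1 * (g B - g 0 + K).
Proof.
set X := \sum_(w : {ffun 'I_T -> bool}) bern_weight p w *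
  \sum_(1 <= t < T.+1) (alpha - miscov (obs_of w) t).
have XE : X = T%:R * alpha - \sum_(w : {ffun 'I_T -> bool}) bern_weight p w *
    \sum_(1 <= t < T.+1) miscov (obs_of w) t.
  rewrite /X; under eq_bigr do rewrite sumrB sumr_const_nat subSS subn0 mulrBr.
  by rewrite sumrB -big_distrl /= sum_bern_weight mul1r mulr_natl.
have miscovE : exp_miscov p rstar r T - alpha = - (T%:R^-1 * X).
  have T_neq0 : (T%:R : R) != 0 by rewrite pnatr_eq0 -lt0n.
  rewrite XE /exp_miscov; under eq_bigr do rewrite mulrCA.
  by rewrite -big_distrr /=; field.
rewrite miscovE normrN normrM ger0_norm ?invr_ge0 ?ler0n // invfM -mulrA.
rewrite ler_wpM2l ?invr_ge0 ?ler0n // /X -expected_ipw_sum.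
apply: le_trans (ler_norm_sum _ _ _) _.
rewrite -[X in _ <= X]mul1r -[in X in _ <= X](sum_bern_weight p (T := T)) big_distrl /=.
apply: ler_sum => w _; rewrite normrM (ger0_norm (weight_ge0 w)).
by apply: ler_wpM2l; [exact: weight_ge0 | exact: ipw_sum_bound].
Qed.

End IMOCP.

Lemma bigmin_nat_gt0 {R : realDomainType} (F : nat -> R) m n :
  (forall t, (m <= t < n)%N -> 0 < F t) -> 0 < \big[Order.min/1]_(m <= t < n) F t.
Proof.
move=> F_gt0; rewrite big_seq; apply: (big_ind (fun x => 0 < x)) => // [x y x0 y0 | t].
  by rewrite lt_min x0 y0.
by rewrite mem_index_iota; exact: F_gt0.
Qed.

Theorem theorem1 (R : realType) (alpha B sigma mu L : R) (P : probability R R)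
  (rstar : nat -> R) (p : nat -> R) (eta : nat -> R) (r1 : R)
  (r : (nat -> bool) -> nat -> R) (T : nat) :
  0 < alpha < 1 -> 0 < B -> 0 < sigma ->
  supported_on P B -> has_bounded_density P ->
  (forall x, derivable (risk P alpha sigma) x 1) ->
  0 < mu -> strongly_convex mu (risk P alpha sigma) ->
  0 < L -> lipschitzL L (derive1 (risk P alpha sigma)) ->
  (forall t, (1 <= t)%N -> 0 <= rstar t <= B) ->
  (forall t, (1 <= t)%N -> 0 < p t <= 1) ->
  (forall t, (1 <= t)%N -> 0 < eta t) ->
  (forall s t, (1 <= s)%N -> (s <= t)%N -> eta t <= eta s) ->
  0 <= r1 <= B ->
  (forall o, r o 1%N = r1) ->
  (forall o t, (1 <= t)%N ->
     (derive1 (risk P alpha sigma)) (r o t.+1) =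
       (derive1 (risk P alpha sigma)) (r o t)
       - eta t * (alpha - ((rstar t > r o t)%R)%:R) * (((o t) : nat)%:R / p t)) ->
  (1 <= T)%N ->
  `| exp_miscov p rstar r T - alpha | <=
    (T%:R * eta T)^-1 *
      (L * B + L * eta 1%N / (mu * \big[Order.min/1]_(1 <= t < T.+1) p t)).
Proof.
move=> /andP[alpha_gt0 alpha_lt1] B_gt0 _ _ _ risk_der mu_gt0 risk_convex _ grad_lip
  rstar_in p_in eta_gt0 eta_nonincr r1_in r_init r_step T_gt0.
set g := derive1 (risk P alpha sigma) in grad_lip r_step *.
have g_mono : strongly_monotone mu g.
  exact: strongly_convex_derive1_monotone risk_convex risk_der.
set q := \big[Order.min/1]_(1 <= t < T.+1) p t.
have q_gt0 : 0 < q.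
  by apply: bigmin_nat_gt0 => t /andP[t1 _]; have /andP[] := p_in t t1.
have step_le t : (1 <= t <= T)%N -> eta t / p t <= eta 1%N / q.
  move=> /andP[t1 tT]; have /andP[pt_gt0 _] := p_in t t1.
  apply: ler_pM; [exact: ltW (eta_gt0 t t1) | by rewrite invr_ge0 ltW
                 | exact: eta_nonincr | ].
  rewrite lef_pV2 ?posrE // /q; apply: (@bigmin_inf_seq _ _ _ _ _ t) => //.
  by rewrite mem_index_iota t1 ltnS.
apply: le_trans (expected_miscov_bound alpha_gt0 alpha_lt1 mu_gt0 g_mono rstar_in p_in
  eta_gt0 eta_nonincr r1_in r_init r_step step_le T_gt0) _.
apply: ler_wpM2l; first by rewrite invr_ge0 mulr_ge0 // ltW // eta_gt0.
have := grad_lip B 0; rewrite subr0 (gtr0_norm B_gt0) => /(le_trans (ler_norm _)) gB.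
have mu_le_L := strongly_monotone_le_lipschitz g_mono L grad_lip.
have : eta 1%N / q <= L / mu * (eta 1%N / q).
  have K_ge0 : 0 <= eta 1%N / q by rewrite divr_ge0 // ltW // eta_gt0.
  by rewrite ler_peMl // ler_pdivlMr // mul1r.
rewrite (_ : L * eta 1%N / (mu * q) = L / mu * (eta 1%N / q));
  last by field; rewrite ?gt_eqF.
lra.
Qed.
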